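(* For any parameters $S_1,\dots,S_{\mathcal K}$ and $\lambda_1,\dots,\lambda_{\mathcal K}$ of the model in the context, the following are equivalent: (1) $0\in\operatorname{ri}D$; (2) the linear system \[ \sum_{j=1}^{\kappa_i}\alpha_{ij}=\lambda_i\ (i=1,\dots,\mathcal K),\qquad \sum_{i=1}^{\mathcal K}\sum_{j=1}^{\kappa_i}\alpha_{ij}\,\delta_{\ell,s^i_j}=\tfrac1n\ (\ell=1,\dots,n) \] has a positive solution $(\alpha_{ij})$ (all $\alpha_{ij}>0$).
   Context: $n$ nodes, non-empty neighborhoods $S_1,\dots,S_{\mathcal K}\subset\{1,\dots,n\}$ covering $\{1,\dots,n\}$, $\kappa_i=|S_i|$, $S_i=\{s^i_1,\dots,s^i_{\kappa_i}\}$; rates $\lambda_i>0$ with $\sum_{i=1}^{\mathcal K}\lambda_i=1$. $\Lambda_i=\{p\in\mathbb R^{\kappa_i}:p_j\ge0,\sum_jp_j=1\}$. $E:\mathbb R^{\kappa_1+\dots+\kappa_{\mathcal K}}\to\mathbb R^n$ is the linear map sending $p=(p^{(1)},\dots,p^{(\mathcal K)})$ to $x$ with $x_\ell=\sum_{i=1}^{\mathcal K}\sum_{j=1}^{\kappa_i}\lambda_ip^{(i)}_j\delta_{\ell,s^i_j}$; $F:\mathbb R^n\to\mathbb R^n$ is the linear map $F(x)_i=x_i-\frac1n\sum_{j=1}^nx_j$. $D=F(E(\Lambda_1\times\dots\times\Lambda_{\mathcal K}))$. $\operatorname{ri}A$ denotes the relative interior of $A$, i.e. the interior of $A$ regarded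 as a subset of its affine hull. $\delta_{\ell,m}$ is the Kronecker delta. *)

From HB Require Import structures.
From mathcomp Require Import all_boot all_order all_algebra.
From mathcomp Require Import reals.
Set Implicit Arguments. Unset Strict Implicit. Unset Printing Implicit Defensive.
Import Order.TTheory GRing.Theory Num.Theory.
Local Open Scope ring_scope.

Definition affine_hull (R : realType) (n : nat) (A : ('I_n -> R) -> Prop)
  : ('I_n -> R) -> Prop :=
  fun x => exists (m : nat) (c : 'I_m -> R) (a : 'I_m -> 'I_n -> R),
    (forall k, A (a k)) /\ \sum_(k < m) c k = 1 /\
    forall l, x l = \sum_(k < m) c k * a k l.

(* Relative interior: interior of A as a subset of its affine hull
   (with the standard topology of R^n, here via sup-norm balls). *)
Definition rel_interior (R : realType) (n : nat) (A : ('I_n -> R) -> Prop)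
  : ('I_n -> R) -> Prop :=
  fun x => A x /\ exists e : R, 0 < e /\
    forall y, affine_hull A y -> (forall l, `|y l - x l| < e) -> A y.

Definition mapE (R : realType) (n K : nat) (kappa : 'I_K -> nat)
  (s : forall i : 'I_K, 'I_(kappa i) -> 'I_n) (lambda : 'I_K -> R)
  (p : forall i : 'I_K, 'I_(kappa i) -> R) : 'I_n -> R :=
  fun l => \sum_(i < K) \sum_(j < kappa i)
             lambda i * p i j * (l == s i j)%:R.

Definition mapF (R : realType) (n : nat) (x : 'I_n -> R) : 'I_n -> R :=
  fun i => x i - n%:R^-1 * \sum_(j < n) x j.

(* D = F(E(Lambda_1 x ... x Lambda_K)). *)
Definition Dset (R : realType) (n K : nat) (kappa : 'I_K -> nat)
  (s : forall i : 'I_K, 'I_(kappa i) -> 'I_n) (lambda : 'I_K -> R)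
  : ('I_n -> R) -> Prop :=
  fun x => exists p : forall i : 'I_K, 'I_(kappa i) -> R,
    (forall i j, 0 <= p i j) /\ (forall i, \sum_(j < kappa i) p i j = 1) /\
    x = mapF (mapE s lambda p).

From HB Require Import structures.
From mathcomp Require Import all_boot all_order all_algebra.
From mathcomp Require Import reals.
From mathcomp Require Import ring lra.
From Stdlib Require Import FunctionalExtensionality IndefiniteDescription.
Import Order.TTheory GRing.Theory Num.Theory.
Local Open Scope ring_scope.

(* With sum_i lambda_i = 1, F o E is the affine map p |-> E p - 1/n on the
   affine span of Lambda = Lambda_1 x ... x Lambda_K, so ri D is the image of
   the strictly positive points of Lambda.  If x is in ri D, one can step
   slightly beyond x away from the image of the barycenter of Lambda; averaging
   a preimage of that point with the barycenter gives a positive preimage of x.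
   Conversely, a small displacement inside the affine span of D is the image of
   a combination of edge directions of the simplices with small coefficients
   (pseudo-inverse), which keeps a positive point of Lambda nonnegative.
   At x = 0 a positive preimage p corresponds to alpha_ij = lambda_i p_ij. *)

Lemma exists_pos_lower_bound {R : realFieldType} {T : finType} (f : T -> R) :
  (forall t, 0 < f t) -> exists2 mu, 0 < mu & forall t, mu <= f t.
Proof.
move=> f_pos; have inv_ge0 t : 0 <= (f t)^-1 by rewrite invr_ge0 ltW.
have S_ge0 : 0 <= \sum_t (f t)^-1 by apply: sumr_ge0.
exists (1 + \sum_t (f t)^-1)^-1; first by rewrite invr_gt0; lra.
move=> t; rewrite -[f t]invrK lef_pV2 ?posrE ?invr_gt0 //; last lra.
rewrite (bigD1 t) //=.
have : 0 <= \sum_(u | u != t) (f u)^-1 by apply: sumr_ge0.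
lra.
Qed.

(* The coordinates are read off through the pseudo-inverse of the matrix with
   rows [v t]. *)
Lemma bounded_coordinates {R : realFieldType} {T : finType} {n}
    (v : T -> 'I_n -> R) :
  exists2 C, 0 <= C & forall (c : T -> R) e, 0 <= e ->
    (forall l, `|\sum_t c t * v t l| <= e) ->
    exists c' : T -> R, (forall l, \sum_t c' t * v t l = \sum_t c t * v t l)
                        /\ forall t, `|c' t| <= C * e.
Proof.
pose M : 'M[R]_(#|T|, n) := \matrix_(r, l) v (enum_val r) l.
pose P := pinvmx M.
have row_sum (x : 'rV_#|T|) l :
    (x *m M) 0 l = \sum_t x 0 (enum_rank t) * v t l.
  rewrite mxE (big_enum_val (fun t => x 0 (enum_rank t) * v t l)).
  by apply: eq_bigr => r _; rewrite mxE enum_valK.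
exists (\sum_r \sum_l `|P l r|); first by do 2!apply: sumr_ge0 => ? _.
move=> c e e_ge0 c_small.
pose y : 'rV_n := \row_l \sum_t c t * v t l.
have y_span : (y <= M)%MS.
  apply/submxP; exists (\row_r c (enum_val r)); apply/rowP => l.
  rewrite row_sum mxE; apply: eq_bigr => t _; by rewrite mxE enum_rankK.
exists (fun t => (y *m P) 0 (enum_rank t)); split.
  by move=> l; rewrite -row_sum mulmxKpV // mxE.
move=> t; rewrite mxE.
apply: (le_trans (ler_norm_sum _ _ _)).
apply: (@le_trans _ _ (\sum_l e * `|P l (enum_rank t)|)).
  apply: ler_sum => l _; rewrite normrM ler_wpM2r //.
  by have := c_small l; rewrite mxE.
rewrite -mulr_sumr mulrC ler_wpM2r // (bigD1 (enum_rank t)) //= lerDl.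
by do 2!apply: sumr_ge0 => ? _.
Qed.

Lemma affine_hull_extend {R : realType} {n} (A : ('I_n -> R) -> Prop) x z t :
  A x -> A z -> affine_hull A (fun l => x l + t * (x l - z l)).
Proof.
move=> Ax Az.
exists 2%N, (fun k : 'I_2 => if val k == 0%N then 1 + t else - t),
  (fun k : 'I_2 => if val k == 0%N then x else z).
split; last split.
- by move=> k; case: ifP.
- rewrite big_ord_recl big_ord1 /=; ring.
- move=> l; rewrite big_ord_recl big_ord1 /=; ring.
Qed.

Lemma rel_interior_extend {R : realType} {n} {A : ('I_n -> R) -> Prop} {x z} :
  rel_interior A x -> A z ->
  exists2 t, 0 < t & A (fun l => x l + t * (x l - z l)).
Proof.
move=> [Ax [e [e_pos x_int]]] Az.
pose B := \sum_l `|x l - z l|.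
have B_ge0 : 0 <= B by apply: sumr_ge0.
have t_pos : 0 < e / (B + 1) by rewrite divr_gt0 //; lra.
exists (e / (B + 1)) => //.
apply: x_int; first exact: affine_hull_extend.
move=> l; rewrite addrC addKr normrM (gtr0_norm t_pos).
have xz_le : `|x l - z l| <= B by rewrite /B (bigD1 l) //= lerDl sumr_ge0.
apply: le_lt_trans (ler_wpM2l (ltW t_pos) xz_le) _.
rewrite mulrAC ltr_pdivrMr; nra.
Qed.

Section Model.

Context {R : realType} {n K : nat} {kappa : 'I_K -> nat}.
Variables (s : forall i : 'I_K, 'I_(kappa i) -> 'I_n) (lambda : 'I_K -> R).

Local Notation E := (mapE s lambda).
Local Notation D := (Dset s lambda).
Local Notation point := (forall i : 'I_K, 'I_(kappa i) -> R).

Lemma mapED (p q : point) l :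
  E (fun i j => p i j + q i j) l = E p l + E q l.
Proof.
rewrite /mapE -big_split; apply: eq_bigr => i _.
rewrite -big_split; apply: eq_bigr => j _ /=; ring.
Qed.

Lemma mapEB (p q : point) l :
  E (fun i j => p i j - q i j) l = E p l - E q l.
Proof.
rewrite /mapE -sumrB; apply: eq_bigr => i _.
rewrite -sumrB; apply: eq_bigr => j _ /=; ring.
Qed.

Lemma mapEZ a (p : point) l : E (fun i j => a * p i j) l = a * E p l.
Proof.
rewrite /mapE mulr_sumr; apply: eq_bigr => i _.
rewrite mulr_sumr; apply: eq_bigr => j _ /=; ring.
Qed.

Lemma mapE_sum m (c : 'I_m -> R) (q : 'I_m -> point) l :
  E (fun i j => \sum_(k < m) c k * q k i j) l = \sum_(k < m) c k * E (q k) l.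
Proof.
under [RHS]eq_bigr do rewrite -mapEZ.
rewrite /mapE exchange_big; apply: eq_bigr => i _.
rewrite exchange_big; apply: eq_bigr => j _.
by rewrite !mulr_sumr mulr_suml.
Qed.

Lemma sum_mapE (p : point) : \sum_l E p l = \sum_i lambda i * \sum_j p i j.
Proof.
rewrite /mapE exchange_big; apply: eq_bigr => i _.
rewrite exchange_big mulr_sumr; apply: eq_bigr => j _.
rewrite (bigD1 (s i j)) //= eqxx mulr1 big1 ?addr0 //.
by move=> l /negbTE ->; rewrite mulr0.
Qed.

Hypothesis lambda_sum : \sum_(i < K) lambda i = 1.

Lemma mapFE (p : point) : (forall i, \sum_j p i j = 1) ->
  forall l, mapF (E p) l = E p l - n%:R^-1.
Proof.
move=> p_sum l; rewrite /mapF sum_mapE.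
under eq_bigr do rewrite p_sum mulr1.
by rewrite lambda_sum mulr1.
Qed.

Lemma affine_hull_Dset y : affine_hull D y ->
  exists q : point, (forall i, \sum_j q i j = 1) /\
                    forall l, y l = E q l - n%:R^-1.
Proof.
move=> [m [c [a [Da [c_sum y_comb]]]]].
have [q q_spec] := functional_choice _ Da.
exists (fun i j => \sum_(k < m) c k * q k i j); split.
  move=> i; rewrite exchange_big /= -[RHS]c_sum; apply: eq_bigr => k _.
  by case: (q_spec k) => _ [q_sum _]; rewrite -mulr_sumr q_sum mulr1.
move=> l; have -> : n%:R^-1 = \sum_(k < m) c k * n%:R^-1 :> R.
  by rewrite -mulr_suml c_sum mul1r.
rewrite y_comb mapE_sum -sumrB; apply: eq_bigr => k _.
by case: (q_spec k) => _ [q_sum ->]; rewrite mapFE // mulrBr.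
Qed.

Section Edges.

Variable j0 : forall i, 'I_(kappa i).

Local Notation T := {i : 'I_K & 'I_(kappa i)}.
Local Notation tagged_at i j := (@Tagged _ i (fun k => 'I_(kappa k)) j).

(* [edge_image t] is the image under E of the edge of the simplex
   Lambda_(tag t) leaving the base vertex [j0] towards vertex [tagged t]. *)
Definition edge_image (t : T) (l : 'I_n) : R :=
  lambda (tag t) * ((l == s (tag t) (tagged t))%:R
                    - (l == s (tag t) (j0 (tag t)))%:R).

Definition recenter (c : T -> R) : point :=
  fun i j => c (tagged_at i j) - (j == j0 i)%:R * \sum_j' c (tagged_at i j').

Lemma sum_recenter c i : \sum_j recenter c i j = 0.
Proof.
rewrite sumrB; under [X in _ - X]eq_bigr do rewrite mulr_natl mulrb.
by rewrite -big_mkcond big_pred1_eq subrr.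
Qed.

Lemma mapE_recenter c l : E (recenter c) l = \sum_t c t * edge_image t l.
Proof.
rewrite (eq_bigr (fun t => c (tagged_at (tag t) (tagged t))
  * edge_image (tagged_at (tag t) (tagged t)) l)); last by case.
rewrite -(@sig_big_dep _ 0 +%R _ (fun i => 'I_(kappa i)) xpredT (fun _ => xpredT)
  (fun i j => c (tagged_at i j) * edge_image (tagged_at i j) l)) /=.
rewrite /mapE; apply: eq_bigr => i _; rewrite /recenter /edge_image /=.
under eq_bigr do rewrite mulrBr mulrBl.
under [RHS]eq_bigr do rewrite mulrBr mulrBr.
rewrite !sumrB; congr (_ - _); first by apply: eq_bigr => j _; ring.
set S := \sum_(j' < kappa i) c (tagged_at i j').
rewrite (bigD1 (j0 i)) //= eqxx mul1r big1 ?addr0; last first.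
  by move=> j /negbTE ->; rewrite mul0r mulr0 mul0r.
rewrite /S mulr_sumr mulr_suml; apply: eq_bigr => j _; ring.
Qed.

Lemma recenter_flatten (d : point) : (forall i, \sum_j d i j = 0) ->
  forall i j, recenter (fun t => d (tag t) (tagged t)) i j = d i j.
Proof. by move=> d_sum i j; rewrite /recenter /= d_sum mulr0 subr0. Qed.

Lemma mapE_zero_sum (d : point) : (forall i, \sum_j d i j = 0) ->
  forall l, E d l = \sum_t d (tag t) (tagged t) * edge_image t l.
Proof.
move=> d_sum l; rewrite -mapE_recenter; apply: eq_bigr => i _.
by apply: eq_bigr => j _; rewrite recenter_flatten.
Qed.

Lemma recenter_norm_le c b : (forall t, `|c t| <= b) ->
  forall i j, `|recenter c i j| <= (1 + (kappa i)%:R) * b.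
Proof.
move=> c_le i j; rewrite mulrDl mul1r.
apply: (le_trans (ler_normB _ _)); apply: lerD; first exact: c_le.
rewrite normrM; apply: (@le_trans _ _ `|\sum_j' c (tagged_at i j')|).
  by case: (j == j0 i); rewrite ?normr1 ?normr0 ?mul1r ?mul0r.
apply: (le_trans (ler_norm_sum _ _ _)).
rewrite mulr_natl -[X in _ <= b *+ X]card_ord -sumr_const.
by apply: ler_sum => j' _.
Qed.

End Edges.

Hypothesis kappa_pos : forall i, (0 < kappa i)%N.

Lemma rel_interior_Dset_pos_preimage x : rel_interior D x ->
  exists p : point, [/\ forall i j, 0 < p i j, forall i, \sum_j p i j = 1
                      & x = mapF (E p)].
Proof.
move=> x_ri.
pose u : point := fun i _ => (kappa i)%:R^-1.
have u_pos i j : 0 < u i j by rewrite invr_gt0 ltr0n.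
have u_sum i : \sum_j u i j = 1.
  by rewrite sumr_const card_ord -[LHS]mulr_natr mulVf // pnatr_eq0 -lt0n.
have Du : D (mapF (E u)) by exists u; split => // i j; exact: ltW.
have [t t_pos [q [q_ge0 [q_sum Eq]]]] := rel_interior_extend x_ri Du.
have t1_neq0 : 1 + t != 0 by rewrite gt_eqF //; lra.
pose p : point := fun i j => (1 + t)^-1 * q i j + t / (1 + t) * u i j.
have p_sum i : \sum_j p i j = 1.
  by rewrite big_split -!mulr_sumr q_sum u_sum /=; field.
exists p; split => //.
  move=> i j; apply: ltr_wpDl; first by rewrite mulr_ge0 // invr_ge0; lra.
  by rewrite !mulr_gt0 // invr_gt0; lra.
apply: functional_extensionality => l.
have := congr1 (fun f => f l) Eq; rewrite /= !mapFE // mapED !mapEZ => Eql.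
(* [n%:R^-1] is hidden from [field], which would otherwise require [n != 0]. *)
rewrite -[E q l](subrK n%:R^-1) -Eql; set N := n%:R^-1; by field.
Qed.

Lemma pos_image_rel_interior_Dset (p0 : point) :
  (forall i j, 0 < p0 i j) -> (forall i, \sum_j p0 i j = 1) ->
  rel_interior D (mapF (E p0)).
Proof.
move=> p0_pos p0_sum.
split; first by exists p0; split => // i j; exact: ltW.
pose j0 i := Ordinal (kappa_pos i).
have [C C_ge0 coords] := bounded_coordinates (edge_image j0).
have [mu mu_pos mu_le] := exists_pos_lower_bound
  (fun t : {i : 'I_K & 'I_(kappa i)} =>
     p0 (tag t) (tagged t) / (1 + (kappa (tag t))%:R))
  (fun t => divr_gt0 (p0_pos _ _) (ltr_wpDr (ler0n _ _) ltr01)).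
pose e := mu / (C + 1).
have e_pos : 0 < e by rewrite divr_gt0 //; lra.
have Ce_le : C * e <= mu.
  by rewrite /e mulrCA ger_pMr // ler_pdivrMr; lra.
exists e; split => // y /affine_hull_Dset [q [q_sum y_q]] y_near.
pose d : point := fun i j => q i j - p0 i j.
have d_sum i : \sum_j d i j = 0 by rewrite sumrB q_sum p0_sum subrr.
have d_y l : \sum_t d (tag t) (tagged t) * edge_image j0 t l
             = y l - mapF (E p0) l.
  by rewrite -mapE_zero_sum // mapEB y_q mapFE //; ring.
have [|c [c_y c_small]] := coords (fun t => d (tag t) (tagged t)) e (ltW e_pos).
  by move=> l; rewrite d_y ltW.
pose q' : point := fun i j => p0 i j + recenter j0 c i j.
have q'_sum i : \sum_j q' i j = 1.
  by rewrite big_split /= p0_sum sum_recenter addr0.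
exists q'; split; [|split => //].
  move=> i j; have := recenter_norm_le j0 c (C * e) c_small i j.
  have := mu_le (Tagged (fun k => 'I_(kappa k)) j).
  rewrite /= ler_pdivlMr ?ltr_wpDr // => p0_ge.
  have k_ge0 : 0 <= (kappa i)%:R :> R by [].
  rewrite /q' ler_norml => /andP[r_ge _]; nra.
apply: functional_extensionality => l.
by rewrite mapFE // mapED mapE_recenter c_y d_y mapFE //; ring.
Qed.

Lemma rel_interior_DsetP x :
  rel_interior D x <->
  exists p : point, [/\ forall i j, 0 < p i j, forall i, \sum_j p i j = 1
                      & x = mapF (E p)].
Proof.
split; first exact: rel_interior_Dset_pos_preimage.
by case=> p [p_pos p_sum ->]; exact: pos_image_rel_interior_Dset.
Qed.

End Model.

Theorem lemma3p5 (R : realType) (n K : nat) (kappa : 'I_K -> nat)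
  (s : forall i : 'I_K, 'I_(kappa i) -> 'I_n) (lambda : 'I_K -> R)
  (kappa_pos : forall i, (0 < kappa i)%N)
  (s_inj : forall i, injective (s i))
  (s_cover : forall l : 'I_n, exists i j, s i j = l)
  (lambda_pos : forall i, 0 < lambda i)
  (lambda_sum : \sum_(i < K) lambda i = 1) :
  rel_interior (Dset s lambda) (fun _ => 0) <->
  exists alpha : forall i : 'I_K, 'I_(kappa i) -> R,
    (forall i j, 0 < alpha i j) /\
    (forall i, \sum_(j < kappa i) alpha i j = lambda i) /\
    (forall l : 'I_n,
       \sum_(i < K) \sum_(j < kappa i) alpha i j * (l == s i j)%:R = n%:R^-1).
Proof.
rewrite (rel_interior_DsetP s lambda lambda_sum kappa_pos); split.
  move=> [p [p_pos p_sum p_0]].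
  exists (fun i j => lambda i * p i j); split; [|split].
  - by move=> i j; rewrite mulr_gt0.
  - by move=> i; rewrite -mulr_sumr p_sum mulr1.
  - move=> l; have := congr1 (fun f => f l) p_0.
    by rewrite /= mapFE // => /esym/subr0_eq.
move=> [alpha [alpha_pos [alpha_sum alpha_n]]].
pose p i j := alpha i j / lambda i.
have p_sum i : \sum_j p i j = 1.
  by rewrite -mulr_suml alpha_sum divff // gt_eqF.
exists p; split => //; first by move=> i j; rewrite divr_gt0.
apply: functional_extensionality => l; rewrite mapFE // -(alpha_n l).
apply/esym/eqP; rewrite subr_eq0; apply/eqP/eq_bigr => i _.
apply: eq_bigr => j _.
by rewrite /p mulrCA mulfV ?mulr1 // gt_eqF.
Qed.
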